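(* Let $\mathcal{X},\mathcal{Y}$ be finite Markov chains, $C:{\bm X}\times{\bm Y}\to\mathbb{R}_+$ a cost function, and $\delta\in(0,1]$. Let $T^\infty_\delta$ be a random variable with $\Pr(T^\infty_\delta=t)=\delta(1-\delta)^t$ for $t\in\mathbb{N}$. Then $$d^{\delta,(\infty)}_{\mathrm{WL}}(\mathcal{X},\mathcal{Y};C)=\min_{(X_t,Y_t)_{t\in\mathbb{N}}\in\Pi_{\mathrm H}(\mathcal{X},\mathcal{Y})}\mathbb{E}\,C(X_{T^\infty_\delta},Y_{T^\infty_\delta}),$$ where $T^\infty_\delta$ is independent of the coupling, and in particular the minimum is attained.
   Context: A finite Markov chain $\mathcal{X}=({\bm X},m^{\bm X}_\bullet,\nu^{\bm X})$ consists of a finite set ${\bm X}$, a transition kernel $m^{\bm X}_\bullet:{\bm X}\to\mathcal{P}({\bm X})$ and an initial distribution $\nu^{\bm X}$. $\mathcal{C}(\alpha,\beta)$ denotes the set of couplings of $\alpha,\beta$. A Markovian coupling between $\mathcal{X}$ and $\mathcal{Y}$ is a (possibly time-inhomogeneous) Markov chain $(X_t,Y_t)_{t\in\mathbb{N}}$ on ${\bm X}\times{\bm Y}$ with $\mathrm{law}(X_0,Y_0)\in\mathcal{C}(\nu^{\bm X},\nu^{\bm Y})$ and, for all $t,x,y$, the conditional law of $(X_{t+1},Y_{t+1})$ given $(X_t,Y_t)=(x,y)$ in $\mathcal{C}(m^{\bm X}_x,m^{\bm Y}_y)$; $\Pi(\mathcal{X},\mathcal{Y})$ is the set of Markovian couplings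 and $\Pi_{\mathrm H}(\mathcal{X},\mathcal{Y})$ the subset of time homogeneous ones (conditional laws independent of $t$). The depth-$\infty$ $\delta$-discounted WL distance is $d^{\delta,(\infty)}_{\mathrm{WL}}(\mathcal{X},\mathcal{Y};C)=\inf_{(X_t,Y_t)\in\Pi(\mathcal{X},\mathcal{Y})}\mathbb{E}\big[\sum_{t=0}^{\infty}\delta(1-\delta)^tC(X_t,Y_t)\big]$. *)

From HB Require Import structures.
From mathcomp Require Import all_boot all_order all_algebra.
From mathcomp Require Import all_classical all_reals.
From mathcomp Require Import topology normedtype sequences.
Set Implicit Arguments. Unset Strict Implicit. Unset Printing Implicit Defensive.
Import Order.TTheory GRing.Theory Num.Theory numFieldNormedType.Exports.
Local Open Scope ring_scope.
Local Open Scope classical_set_scope.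

Section Defs.
Variable R : realType.

Definition is_dist (T : finType) (p : {ffun T -> R}) : Prop :=
  (forall x, 0 <= p x) /\ \sum_(x : T) p x = 1.

Record markov_chain := MarkovChain {
  mc_state : finType;
  mc_kernel : mc_state -> {ffun mc_state -> R};
  mc_init : {ffun mc_state -> R};
  mc_kernel_dist : forall x, is_dist (mc_kernel x);
  mc_init_dist : is_dist mc_init }.

Definition is_coupling (X Y : finType) (alpha : {ffun X -> R}) (beta : {ffun Y -> R})
  (pi : {ffun X * Y -> R}) : Prop :=
  is_dist pi /\
  (forall x, \sum_(y : Y) pi (x, y) = alpha x) /\
  (forall y, \sum_(x : X) pi (x, y) = beta y).

Record chain_on (X Y : finType) := ChainOn {
  ch_init : {ffun X * Y -> R};
  ch_kernel : nat -> X * Y -> {ffun X * Y -> R} }.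

Definition markovian_coupling (cX cY : markov_chain)
  (c : chain_on (mc_state cX) (mc_state cY)) : Prop :=
  is_coupling (mc_init cX) (mc_init cY) (ch_init c) /\
  forall t x y, is_coupling (mc_kernel x) (mc_kernel y) (ch_kernel c t (x, y)).

Definition homogeneous_markovian_coupling (cX cY : markov_chain)
  (c : chain_on (mc_state cX) (mc_state cY)) : Prop :=
  markovian_coupling c /\ forall t z, ch_kernel c t z = ch_kernel c 0 z.

Fixpoint chain_law (X Y : finType) (c : chain_on X Y) (t : nat) : {ffun X * Y -> R} :=
  match t with
  | 0 => ch_init c
  | t'.+1 => [ffun z' => \sum_(z : X * Y) chain_law c t' z * ch_kernel c t' z z']
  end.

Definition expected_cost_at (X Y : finType) (c : chain_on X Y) (C : X -> Y -> R)
  (t : nat) : R :=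
  \sum_(z : X * Y) chain_law c t z * C z.1 z.2.

Definition geom_law (delta : R) (t : nat) : R := delta * (1 - delta) ^+ t.

(* E[ sum_t delta (1-delta)^t C(X_t, Y_t) ] (expectation and nonnegative
   series exchanged), and, equally, E[C(X_T, Y_T)] with T independent of
   the coupling and distributed as geom_law delta. *)
Definition discounted_cost (X Y : finType) (c : chain_on X Y) (C : X -> Y -> R)
  (delta : R) : R :=
  limn (series (fun t => geom_law delta t * expected_cost_at c C t)).

Definition cost_at_geometric_time (X Y : finType) (c : chain_on X Y)
  (C : X -> Y -> R) (delta : R) : R :=
  limn (series (fun t => geom_law delta t * expected_cost_at c C t)).

Definition dWL_inf (cX cY : markov_chain) (C : mc_state cX -> mc_state cY -> R)
  (delta : R) : R :=
  inf [set v | exists c : chain_on (mc_state cX) (mc_state cY),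
         markovian_coupling c /\ v = discounted_cost c C delta].

End Defs.

From HB Require Import structures.
From mathcomp Require Import all_boot all_order all_algebra.
From mathcomp Require Import all_classical all_reals.
From mathcomp Require Import topology normedtype sequences derive ring.
Import Order.TTheory GRing.Theory Num.Theory numFieldNormedType.Exports.
Set Implicit Arguments. Unset Printing Implicit Defensive.
Local Open Scope ring_scope.
Local Open Scope classical_set_scope.

(* The optimal value function is the fixed point [V] of the Bellman
   operator  (B V)(x, y) = delta C(x, y) + (1 - delta) min_{pi in C(m_x, m_y)} E_pi V,
   where the minimum over couplings is attained because the couplings of two
   laws form a compact set, and is 1-Lipschitz in [V] for the sup norm, so that
   B is a (1 - delta)-contraction.  Along any Markovian coupling,
   E V(X_t, Y_t) <= delta E C(X_t, Y_t) + (1 - delta) E V(X_{t+1}, Y_{t+1});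
   unrolling this and letting t -> oo (V is bounded) shows that the discounted
   cost is at least E V(X_0, Y_0), hence at least the minimum of E_pi V over
   initial couplings pi.  The time-homogeneous chain started from a minimising
   initial coupling and moving by minimising kernel couplings turns every
   inequality into an equality, so it attains this lower bound. *)

(* The library equips matrices with a complete uniform structure and a normed
   module structure separately; restating completeness builds their join
   [completeNormedModType], which [banach_fixed_point] needs. *)
HB.instance Definition _ (R : realType) (m n : nat) :=
  Uniform_isComplete.Build 'M[R]_(m, n) (@mx_complete R m n).

Lemma closure_preimage (T U : topologicalType) (f : T -> U) (A : set T) (F : set U) :
  continuous f -> closed F -> A `<=` f @^-1` F -> closure A `<=` f @^-1` F.
Proof.
move=> cf cF AF; apply: subset_trans (closureS AF) _.
exact: preimage_closed (fun x _ => cf x) cF.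
Qed.

Lemma inf_attained (R : realType) (E : set R) x : E x -> lbound E x -> inf E = x.
Proof.
move=> Ex lbx; apply/le_anti/andP; split.
  by apply: ge_inf Ex; exists x.
by apply: lb_le_inf lbx; exists x.
Qed.

Section MatrixNorm.
Context {R : realDomainType} {m n : nat}.

Lemma mx_coord_le_norm (A : 'M[R]_(m, n)) i j : `|A i j| <= `|A|.
Proof.
rewrite [leRHS]/Num.norm /= mx_normrE.
exact: (le_bigmax _ (fun ij : 'I_m * 'I_n => `|A ij.1 ij.2|) (i, j)).
Qed.

Lemma mx_norm_le (A : 'M[R]_(m, n)) M :
  0 <= M -> (forall i j, `|A i j| <= M) -> `|A| <= M.
Proof.
move=> M0 AM; rewrite [leLHS]/Num.norm /= mx_normrE.
by apply: bigmax_le => // -[i j] _; exact: AM.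
Qed.

End MatrixNorm.

Section RowVectorCoordinates.
Context {R : realType} {T : finType}.

Definition ffun_of_rV (v : 'rV[R]_#|T|) : {ffun T -> R} :=
  [ffun z => v ord0 (enum_rank z)].

Definition rV_of_fun (f : T -> R) : 'rV[R]_#|T| := \row_i f (enum_val i).

Lemma rV_of_funK f z : ffun_of_rV (rV_of_fun f) z = f z.
Proof. by rewrite ffunE mxE enum_rankK. Qed.

Lemma rV_of_ffunK (f : {ffun T -> R}) : ffun_of_rV (rV_of_fun f) = f.
Proof. by apply/ffunP => z; rewrite rV_of_funK. Qed.

Lemma continuous_ffun_of_rV z : continuous (fun v => ffun_of_rV v z).
Proof.
rewrite (_ : (fun v => _) = fun v : 'rV[R]_#|T| => v ord0 (enum_rank z)).
  exact: coord_continuous.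
by apply: funext => v; rewrite ffunE.
Qed.

Lemma continuous_sum (I : finType) (F : I -> 'rV[R]_#|T| -> R) :
  (forall i, continuous (F i)) -> continuous (fun v => \sum_i F i v).
Proof.
by move=> Fc; exact: (@continuous_big R I +%R 0 predT add_continuous _ _ _ (fun i _ => Fc i)).
Qed.

End RowVectorCoordinates.

Lemma dist_le1 (R : realType) (T : finType) (p : {ffun T -> R}) z :
  is_dist p -> p z <= 1.
Proof.
move=> [p0 <-]; rewrite (bigD1 z) //= lerDl.
by apply: sumr_ge0 => w _; exact: p0.
Qed.

Section OptimalCoupling.
Context {R : realType} {X Y : finType} {al : {ffun X -> R}} {be : {ffun Y -> R}}.
Hypotheses (hal : is_dist al) (hbe : is_dist be).

Lemma product_coupling : is_coupling al be [ffun z => al z.1 * be z.2].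
Proof.
have [[al0 al1] [be0 be1]] := (hal, hbe).
split; [split|split].
- by move=> z; rewrite ffunE mulr_ge0.
- under eq_bigr do rewrite ffunE.
  rewrite -(pair_big predT predT (fun x y => al x * be y)) /= -al1.
  by apply: eq_bigr => x _; rewrite -big_distrr /= be1 mulr1.
- by move=> x; under eq_bigr do rewrite ffunE /=; rewrite -big_distrr /= be1 mulr1.
- by move=> y; under eq_bigr do rewrite ffunE /=; rewrite -big_distrl /= al1 mul1r.
Qed.

Let couplings := [set v : 'rV[R]_#|{: X * Y}| | is_coupling al be (ffun_of_rV v)].

Let closed_couplings : closed couplings.
Proof.
have sumc (I : finType) (h : I -> X * Y) :
    continuous (fun v : 'rV[R]_#|{: X * Y}| => \sum_i ffun_of_rV v (h i)).
  by apply: continuous_sum => i; exact: continuous_ffun_of_rV.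
move=> v cl_v; split; [split|split].
- move=> z; apply: (closure_preimage (continuous_ffun_of_rV z) (@closed_ge R 0)) cl_v.
  by move=> w [[+ _] _]; apply.
- apply: (closure_preimage (sumc _ id) (@closed_eq R 1)) cl_v.
  by move=> w [[_ +] _].
- move=> x; apply: (closure_preimage (sumc _ (pair x)) (@closed_eq R (al x))) cl_v.
  by move=> w [_ [+ _]]; apply.
- move=> y; apply: (closure_preimage (sumc _ (pair^~ y)) (@closed_eq R (be y))) cl_v.
  by move=> w [_ [_ +]]; apply.
Qed.

Let compact_couplings : compact couplings.
Proof.
apply: (subclosed_compact closed_couplings
  (@rV_compact R _ (fun=> `[0, 1]%classic) (fun=> @segment_compact R 0 1))).
move=> v [[v0 v1] _] i /=; have := dist_le1 (enum_val i) (conj v0 v1).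
by have := v0 (enum_val i); rewrite ffunE enum_valK in_itv /= => -> ->.
Qed.

Lemma exists_optimal_coupling (f : X * Y -> R) :
  exists2 pi, is_coupling al be pi &
    forall pi', is_coupling al be pi' -> \sum_z pi z * f z <= \sum_z pi' z * f z.
Proof.
have cost_cont : continuous (fun v => \sum_z ffun_of_rV v z * f z).
  apply: continuous_sum => z v; apply: continuousM; first exact: continuous_ffun_of_rV.
  exact: cst_continuous.
have nonempty : couplings !=set0.
  exists (rV_of_fun [ffun z => al z.1 * be z.2]).
  by rewrite /couplings /= rV_of_ffunK; exact: product_coupling.
have [v /set_mem cv vmin] :=
  compact_EVT_min nonempty compact_couplings (continuous_subspaceT cost_cont).
exists (ffun_of_rV v) => // pi' cpi'.
have : rV_of_fun pi' \in couplings.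
  by rewrite inE /couplings /= rV_of_ffunK.
by move=> /vmin; under [X in _ <= X -> _]eq_bigr do rewrite rV_of_funK.
Qed.

Definition optimal_coupling (f : X * Y -> R) : {ffun X * Y -> R} :=
  projT1 (cid2 (exists_optimal_coupling f)).

Lemma optimal_couplingP f : is_coupling al be (optimal_coupling f).
Proof. by rewrite /optimal_coupling; case: cid2 => p /= ? _. Qed.

Lemma optimal_coupling_min f pi : is_coupling al be pi ->
  \sum_z optimal_coupling f z * f z <= \sum_z pi z * f z.
Proof. by rewrite /optimal_coupling; case: cid2 => p /= _; apply. Qed.

End OptimalCoupling.

Section DiscountedRecursion.
Context {R : realType} {q : R} {b g : nat -> R}.
Hypotheses (q_ge0 : 0 <= q) (q_lt1 : q < 1).

Lemma discounted_sum_le : (forall t, b t <= g t + q * b t.+1) ->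
  forall n, b 0 <= series (fun t => q ^+ t * g t) n + q ^+ n * b n.
Proof.
move=> bg; elim=> [|n IH]; first by rewrite seriesEord /= big_ord0 add0r expr0 mul1r.
apply: le_trans IH _; rewrite seriesSr -addrA lerD2l exprSr -mulrA -mulrDr.
by apply: ler_wpM2l; [exact: exprn_ge0 | exact: bg].
Qed.

Lemma discounted_sum_eq : (forall t, b t = g t + q * b t.+1) ->
  forall n, series (fun t => q ^+ t * g t) n = b 0 - q ^+ n * b n.
Proof.
move=> bg; elim=> [|n IH]; first by rewrite seriesEord /= big_ord0 expr0 mul1r subrr.
by rewrite seriesSr IH (bg n) exprSr; ring.
Qed.

Lemma is_cvg_discounted_series K : (forall t, 0 <= g t <= K) ->
  cvgn (series (fun t => q ^+ t * g t)).
Proof.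
move=> gK; have K_ge0 : 0 <= K by case/andP: (gK 0) => /le_trans; apply.
apply: (@series_le_cvg _ _ (geometric K q)) => [t|t|t|].
- by case/andP: (gK t) => g0 _; rewrite mulr_ge0 ?exprn_ge0.
- by rewrite /= mulr_ge0 ?exprn_ge0.
- by case/andP: (gK t) => _ gtK; rewrite /= mulrC ler_wpM2r ?exprn_ge0.
- by apply: is_cvg_geometric_series; rewrite ger0_norm.
Qed.

Context {M : R}.
Hypothesis b_bounded : forall t, `|b t| <= M.

Lemma discounted_tail_cvg0 : (fun n => q ^+ n * b n) @ \oo --> 0.
Proof.
apply/norm_cvg0P; apply: (@squeeze_cvgr _ _ _ _ (fun=> 0) (fun n => q ^+ n * M)).
- apply: nearW => n; rewrite normr_ge0 normrM ger0_norm ?exprn_ge0 //=.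
  by rewrite ler_wpM2l ?exprn_ge0.
- exact: cvg_cst.
- by rewrite -(mul0r M); apply: cvgM (cvg_cst _); apply: cvg_expr; rewrite ger0_norm.
Qed.

Lemma discounted_series_cvg_eq : (forall t, b t = g t + q * b t.+1) ->
  series (fun t => q ^+ t * g t) @ \oo --> b 0.
Proof.
move=> bg; rewrite (funext (discounted_sum_eq bg)) -[X in _ --> X]subr0.
exact: cvgB (cvg_cst _) discounted_tail_cvg0.
Qed.

Lemma discounted_series_lim_ge : (forall t, b t <= g t + q * b t.+1) ->
  cvgn (series (fun t => q ^+ t * g t)) ->
  b 0 <= limn (series (fun t => q ^+ t * g t)).
Proof.
move=> bg cS.
have cSb : series (fun t => q ^+ t * g t) n + q ^+ n * b n @[n --> \oo] -->
    limn (series (fun t => q ^+ t * g t)) + 0.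
  exact: cvgD cS discounted_tail_cvg0.
rewrite -[leRHS]addr0 -(cvg_lim _ cSb) //.
by apply: limr_ge; [exact: cvgP cSb | exact: nearW (discounted_sum_le bg)].
Qed.

End DiscountedRecursion.

Section ChainLaw.
Context {R : realType} {cX cY : markov_chain R}.
Local Notation X := (mc_state cX).
Local Notation Y := (mc_state cY).
Context {c : chain_on R X Y}.

Lemma expected_cost_at_succ (f : X -> Y -> R) t :
  expected_cost_at c f t.+1 =
  \sum_z chain_law c t z * \sum_w ch_kernel c t z w * f w.1 w.2.
Proof.
rewrite /expected_cost_at /=; under eq_bigr do rewrite ffunE big_distrl /=.
rewrite exchange_big /=; apply: eq_bigr => z _.
by rewrite big_distrr /=; apply: eq_bigr => w _; rewrite mulrA.
Qed.

Hypothesis c_markov : markovian_coupling c.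

Lemma chain_kernel_coupling t z :
  is_coupling (mc_kernel z.1) (mc_kernel z.2) (ch_kernel c t z).
Proof. by case: z => x y; exact: c_markov.2. Qed.

Lemma chain_law_dist t : is_dist (chain_law c t).
Proof.
elim: t => [|t [law_ge0 law_sum1]]; first exact: c_markov.1.1.
split=> [w|] /=.
  rewrite ffunE; apply: sumr_ge0 => z _; rewrite mulr_ge0 //.
  exact: (chain_kernel_coupling t z).1.1.
under eq_bigr do rewrite ffunE.
rewrite exchange_big /= -law_sum1; apply: eq_bigr => z _.
by rewrite -big_distrr /= (chain_kernel_coupling t z).1.2 mulr1.
Qed.

Lemma expected_cost_at_norm_le (f : X -> Y -> R) t :
  `|expected_cost_at c f t| <= \sum_z `|f z.1 z.2|.
Proof.
have [law_ge0 law_sum1] := chain_law_dist t.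
apply: le_trans (ler_norm_sum _ _ _) _.
rewrite -[leRHS]mul1r -law_sum1 big_distrl /=; apply: ler_sum => z _.
rewrite normrM ger0_norm // ler_wpM2l // (bigD1 z) //= lerDl.
by apply: sumr_ge0 => w _.
Qed.

End ChainLaw.

Section Bellman.
Context {R : realType} {cX cY : markov_chain R}.
Local Notation X := (mc_state cX).
Local Notation Y := (mc_state cY).
Variables (C : X -> Y -> R) (delta : R).
Hypotheses (delta_gt0 : 0 < delta) (delta_le1 : delta <= 1).

Definition kernel_coupling (V : X -> Y -> R) (z : X * Y) : {ffun X * Y -> R} :=
  optimal_coupling (mc_kernel_dist z.1) (mc_kernel_dist z.2) (fun w => V w.1 w.2).

Definition min_transport (V : X -> Y -> R) (z : X * Y) : R :=
  \sum_w kernel_coupling V z w * V w.1 w.2.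

Lemma min_transport_le V z pi : is_coupling (mc_kernel z.1) (mc_kernel z.2) pi ->
  min_transport V z <= \sum_w pi w * V w.1 w.2.
Proof. exact: optimal_coupling_min. Qed.

Let min_transport_sub_le U W z M : (forall x y, `|U x y - W x y| <= M) ->
  min_transport U z - min_transport W z <= M.
Proof.
move=> UW; have [[p_ge0 p_sum1] _] := optimal_couplingP (mc_kernel_dist z.1)
  (mc_kernel_dist z.2) (fun w => W w.1 w.2).
apply: le_trans (_ : \sum_w kernel_coupling W z w * U w.1 w.2 - min_transport W z <= M).
  by rewrite lerD2r min_transport_le //; exact: optimal_couplingP.
rewrite /min_transport -sumrB -[leRHS]mul1r -p_sum1 big_distrl /=.
apply: ler_sum => w _; rewrite -mulrBr ler_wpM2l //.
exact: le_trans (ler_norm _) (UW _ _).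
Qed.

Lemma min_transport_lipschitz U W z M : (forall x y, `|U x y - W x y| <= M) ->
  `|min_transport U z - min_transport W z| <= M.
Proof.
move=> UW; rewrite ler_norml min_transport_sub_le // andbT lerNl opprB.
by apply: min_transport_sub_le => x y; rewrite distrC.
Qed.

Definition bellman (V : X -> Y -> R) (x : X) (y : Y) : R :=
  delta * C x y + (1 - delta) * min_transport V (x, y).

Lemma bellman_lipschitz U W x y M : (forall x y, `|U x y - W x y| <= M) ->
  `|bellman U x y - bellman W x y| <= (1 - delta) * M.
Proof.
move=> UW; rewrite /bellman opprD addrACA subrr add0r -mulrBr normrM.
by rewrite ger0_norm ?subr_ge0 // ler_wpM2l ?subr_ge0 // min_transport_lipschitz.
Qed.

Lemma exists_bellman_fixpoint : exists V, forall x y, V x y = bellman V x y.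
Proof.
have q_ge0 : 0 <= 1 - delta by rewrite subr_ge0.
pose cost_of (v : 'rV[R]_#|{: X * Y}|) x y := ffun_of_rV v (x, y).
pose B v := rV_of_fun (fun z => bellman (cost_of v) z.1 z.2).
have B_contraction : is_contraction (totalfun_ setT B).
  exists (interval_inference.NngNum q_ge0); split=> [|[u w] _ /=].
    by rewrite /= ltrBlDr ltrDl.
  apply: mx_norm_le => [|i j]; first by rewrite mulr_ge0.
  rewrite !mxE; apply: bellman_lipschitz => x y.
  have := mx_coord_le_norm (u - w) ord0 (enum_rank (x, y)).
  by rewrite /cost_of !ffunE !mxE.
have [v _ v_fix] := banach_fixed_point B_contraction closedT (ex_intro _ 0 I).
by exists (cost_of v) => x y; rewrite {1}/cost_of {1}v_fix /B rV_of_funK.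
Qed.

End Bellman.

Section GreedyCoupling.
Context {R : realType} {cX cY : markov_chain R}.
Local Notation X := (mc_state cX).
Local Notation Y := (mc_state cY).
Context {C : X -> Y -> R} {delta : R}.
Hypotheses (C_ge0 : forall x y, 0 <= C x y).
Hypotheses (delta_gt0 : 0 < delta) (delta_le1 : delta <= 1).
Let q_ge0 : 0 <= 1 - delta. Proof. by rewrite subr_ge0. Qed.
Let q_lt1 : 1 - delta < 1. Proof. by rewrite ltrBlDr ltrDl. Qed.

Variable V : X -> Y -> R.
Hypothesis V_bellman : forall x y, V x y = bellman C delta V x y.

Definition greedy_chain : chain_on R X Y :=
  ChainOn (optimal_coupling (mc_init_dist cX) (mc_init_dist cY) (fun w => V w.1 w.2))
    (fun _ => kernel_coupling V).

Lemma greedy_chain_homogeneous : homogeneous_markovian_coupling greedy_chain.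
Proof.
split=> //; split=> [|t x y]; first exact: optimal_couplingP.
exact: (optimal_couplingP (mc_kernel_dist (x, y).1)).
Qed.

Lemma discounted_cost_series (c : chain_on R X Y) :
  series (fun t => geom_law delta t * expected_cost_at c C t) =
  series (fun t => (1 - delta) ^+ t * (delta * expected_cost_at c C t)).
Proof. by congr series; apply: funext => t; rewrite /geom_law; ring. Qed.

Lemma is_cvg_discounted_cost (c : chain_on R X Y) : markovian_coupling c ->
  cvgn (series (fun t => geom_law delta t * expected_cost_at c C t)).
Proof.
move=> c_markov; rewrite discounted_cost_series.
apply: (is_cvg_discounted_series q_ge0 q_lt1 (delta * \sum_z `|C z.1 z.2|)) => t.
have EC_ge0 : 0 <= expected_cost_at c C t.
  apply: sumr_ge0 => z _; rewrite mulr_ge0 //; exact: (chain_law_dist c_markov t).1.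
have delta_ge0 := ltW delta_gt0.
rewrite mulr_ge0 //= ler_wpM2l //.
exact: le_trans (ler_norm _) (expected_cost_at_norm_le c_markov C t).
Qed.

Lemma expected_value_bellman (c : chain_on R X Y) t :
  expected_cost_at c V t =
  delta * expected_cost_at c C t +
  (1 - delta) * \sum_z chain_law c t z * min_transport V z.
Proof.
rewrite /expected_cost_at !big_distrr -big_split /=; apply: eq_bigr => z _.
by rewrite V_bellman /bellman -surjective_pairing; ring.
Qed.

Lemma expected_value_le_succ (c : chain_on R X Y) : markovian_coupling c -> forall t,
  expected_cost_at c V t <=
  delta * expected_cost_at c C t + (1 - delta) * expected_cost_at c V t.+1.
Proof.
move=> c_markov t; rewrite expected_value_bellman expected_cost_at_succ lerD2l.
rewrite ler_wpM2l ?subr_ge0 //; apply: ler_sum => z _.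
rewrite ler_wpM2l ?(chain_law_dist c_markov t).1 //.
exact: min_transport_le (chain_kernel_coupling c_markov t z).
Qed.

Lemma greedy_expected_value_succ t :
  expected_cost_at greedy_chain V t =
  delta * expected_cost_at greedy_chain C t +
  (1 - delta) * expected_cost_at greedy_chain V t.+1.
Proof. by rewrite expected_value_bellman expected_cost_at_succ. Qed.

Lemma greedy_discounted_cost :
  cost_at_geometric_time greedy_chain C delta = expected_cost_at greedy_chain V 0.
Proof.
rewrite /cost_at_geometric_time discounted_cost_series; apply: cvg_lim => //.
exact (discounted_series_cvg_eq q_ge0 q_lt1
  (expected_cost_at_norm_le greedy_chain_homogeneous.1 V) greedy_expected_value_succ).
Qed.

Lemma greedy_discounted_cost_le (c : chain_on R X Y) : markovian_coupling c ->
  cost_at_geometric_time greedy_chain C delta <= cost_at_geometric_time c C delta.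
Proof.
move=> c_markov; rewrite greedy_discounted_cost.
apply: le_trans (_ : expected_cost_at c V 0 <= _).
  exact: optimal_coupling_min c_markov.1.
rewrite /cost_at_geometric_time discounted_cost_series.
have := is_cvg_discounted_cost c_markov; rewrite discounted_cost_series.
exact: (discounted_series_lim_ge q_ge0 q_lt1 (expected_cost_at_norm_le c_markov V)
  (expected_value_le_succ c_markov)).
Qed.

End GreedyCoupling.

Theorem proposition14 (R : realType) (cX cY : markov_chain R)
  (C : mc_state cX -> mc_state cY -> R) (delta : R)
  (hC : forall x y, 0 <= C x y) (hd0 : 0 < delta) (hd1 : delta <= 1) :
  exists c : chain_on R (mc_state cX) (mc_state cY),
    homogeneous_markovian_coupling c /\
    cost_at_geometric_time c C delta = dWL_inf C delta /\
    (forall c' : chain_on R (mc_state cX) (mc_state cY),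
        homogeneous_markovian_coupling c' ->
        cost_at_geometric_time c C delta <= cost_at_geometric_time c' C delta).
Proof.
have [V V_bellman] := exists_bellman_fixpoint C delta hd0 hd1.
have greedy_homogeneous := greedy_chain_homogeneous V.
have greedy_optimal := greedy_discounted_cost_le hC hd0 hd1 V V_bellman.
exists (greedy_chain V); split=> //; split; last by move=> c' [/greedy_optimal].
(* [dWL_inf] is stated with [discounted_cost], the same series as
   [cost_at_geometric_time]. *)
apply/esym/inf_attained.
  by exists (greedy_chain V); split=> //; exact: greedy_homogeneous.1.
by move=> _ [c [/greedy_optimal c_ge ->]].
Qed.
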